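(* Let $R$ be an abelian ring (an associative ring with identity in which every idempotent is central). Then $R$ is weakly $r$-clean if and only if $R$ is a weakly exchange ring.
   Context: For a ring $R$ with identity, $Idem(R)$ denotes its idempotents and $Reg(R)=\{r\in R:\ r=ryr \text{ for some } y\in R\}$ its regular elements. An element $x\in R$ is weakly $r$-clean if $x=r+e$ or $x=r-e$ for some $r\in Reg(R)$, $e\in Idem(R)$; $R$ is weakly $r$-clean if all its elements are. A ring $R$ is a weakly exchange ring if for every $x\in R$ there is an idempotent $e\in xR$ such that $1-e\in(1-x)R$ or $1-e\in(1+x)R$. *)

From mathcomp Require Import all_boot all_algebra.
Set Implicit Arguments. Unset Strict Implicit. Unset Printing Implicit Defensive.
Import GRing.Theory.
Local Open Scope ring_scope.

Definition idempotent (R : pzRingType) (e : R) : Prop := e * e = e.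

Definition regular (R : pzRingType) (r : R) : Prop := exists y : R, r = r * y * r.

Definition abelian_ring (R : pzRingType) : Prop :=
  forall e : R, idempotent e -> forall a : R, e * a = a * e.

Definition weakly_r_clean_elt (R : pzRingType) (x : R) : Prop :=
  exists r e : R, regular r /\ idempotent e /\ (x = r + e \/ x = r - e).

Definition weakly_r_clean (R : pzRingType) : Prop :=
  forall x : R, weakly_r_clean_elt x.

Definition in_right_ideal (R : pzRingType) (a b : R) : Prop := exists y : R, b = a * y.

Definition weakly_exchange (R : pzRingType) : Prop :=
  forall x : R, exists e : R, idempotent e /\ in_right_ideal x e /\
    (in_right_ideal (1 - x) (1 - e) \/ in_right_ideal (1 + x) (1 - e)).

(* In an abelian ring every idempotent e is central, so R splits as eR x (1 - e)R
   and regularity can be checked in each corner.  If e \in xR and 1 - e \in (1 - x)R,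
   then ex and (1 - e)(1 - x) are regular in their corners, hence so is
   x - (1 - e) = ex - (1 - e)(1 - x).  Conversely, if x = r + e with r = ryr, then
   f = ry is a central idempotent, and the symmetric difference
   g = f(1 - e) + (1 - f)e satisfies g \in xR and 1 - g \in (1 - x)R.  The variants
   with 1 + x and r - e follow by replacing x with -x. *)

From Pilot Require Import Defs.
From mathcomp Require Import all_boot all_algebra.
(* Make [idempotent] refer to Defs.idempotent again, not to ssrfun's notation. *)
Import Defs.
Set Implicit Arguments.
Unset Strict Implicit.
Unset Printing Implicit Defensive.
Import GRing.Theory.
Local Open Scope ring_scope.

Section RegularElements.
Variable R : pzRingType.
Implicit Types a b e r x : R.

Lemma regularN r : regular r -> regular (- r).
Proof. by case=> y ry; exists (- y); rewrite mulrNN mulrN -ry. Qed.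

Lemma in_right_idealN x e : in_right_ideal x e -> in_right_ideal (- x) e.
Proof. by case=> a ->; exists (- a); rewrite mulrNN. Qed.

Lemma regular_idempotent_mul x e a : idempotent e -> e = x * a -> regular (e * x).
Proof. by move=> ee exa; exists a; rewrite -(mulrA e x) -exa ee mulrA ee. Qed.

Lemma idempotent_mul_compl e : idempotent e -> e * (1 - e) = 0.
Proof. by move=> ee; rewrite mulrBr mulr1 ee subrr. Qed.

Lemma idempotent_compl_mul e : idempotent e -> (1 - e) * e = 0.
Proof. by move=> ee; rewrite mulrBl mul1r ee subrr. Qed.

Lemma idempotent_compl e : idempotent e -> idempotent (1 - e).
Proof. by move=> ee; rewrite /idempotent mulrBl mul1r idempotent_mul_compl ?subr0. Qed.

Lemma idempotentM a b : idempotent a -> idempotent b -> GRing.comm a b -> idempotent (a * b).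
Proof. by move=> aa bb ab; rewrite /idempotent mulrA -(mulrA a b a) -ab mulrA aa -mulrA bb. Qed.

Lemma idempotentD_orth a b : idempotent a -> idempotent b -> a * b = 0 -> b * a = 0 ->
  idempotent (a + b).
Proof. by move=> aa bb ab ba; rewrite /idempotent mulrDr !mulrDl aa bb ab ba addr0 add0r. Qed.

Lemma mulr_orth a b c d : a * b = 0 -> GRing.comm c b -> a * c * (b * d) = 0.
Proof. by move=> ab cb; rewrite mulrA -(mulrA a c b) cb mulrA ab !mul0r. Qed.

Lemma regular_add_orth a b : regular a -> regular b ->
  (forall t, a * t * b = 0) -> (forall t, b * t * a = 0) -> regular (a + b).
Proof.
move=> [y aya] [z bzb] ab0 ba0; exists (y * a * y + z * b * z).
have awa : a * (y * a * y + z * b * z) * a = a.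
  by rewrite mulrDr mulrDl !mulrA -aya -aya ab0 !mul0r addr0.
have bwb : b * (y * a * y + z * b * z) * b = b.
  by rewrite mulrDr mulrDl !mulrA -bzb -bzb ba0 !mul0r add0r.
by rewrite mulrDr !mulrDl awa bwb ab0 ba0 addr0 add0r.
Qed.

End RegularElements.

Section CentralIdempotent.
Variables (R : pzRingType) (e : R).
Hypotheses (idem_e : idempotent e) (central_e : forall a : R, GRing.comm e a).

Lemma central_compl (a : R) : GRing.comm (1 - e) a.
Proof. exact/commr_sym/commrB/commr_sym/central_e/commr1. Qed.

Lemma central_idempotent_orth (z : R) : e * z * (1 - e) = 0.
Proof. by rewrite central_e -mulrA idempotent_mul_compl ?mulr0. Qed.

Lemma central_idempotent_orth_compl (z : R) : (1 - e) * z * e = 0.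
Proof. by rewrite -mulrA -central_e mulrA idempotent_compl_mul ?mul0r. Qed.

Lemma regular_add_corners (u v : R) :
  regular (e * u) -> regular ((1 - e) * v) -> regular (e * u + (1 - e) * v).
Proof.
move=> reg_u reg_v; apply: regular_add_orth => // t.
  by rewrite !mulrA -(mulrA e u t) central_idempotent_orth mul0r.
by rewrite !mulrA -(mulrA (1 - e) v t) central_idempotent_orth_compl mul0r.
Qed.

Lemma regular_sub_compl (x : R) :
  in_right_ideal x e -> in_right_ideal (1 - x) (1 - e) -> regular (x - (1 - e)).
Proof.
move=> [a exa] [b exb].
have -> : x - (1 - e) = e * x + (1 - e) * (x - 1).
  by rewrite mulrBr mulr1 addrA -mulrDl subrKC mul1r.
apply: regular_add_corners; first exact: regular_idempotent_mul exa.
rewrite -(opprB 1 x) mulrN; apply: regularN.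
exact: regular_idempotent_mul (idempotent_compl idem_e) exb.
Qed.

End CentralIdempotent.

Definition symdiff (R : pzRingType) (f e : R) : R := f * (1 - e) + (1 - f) * e.

Section SymmetricDifference.
Variable R : pzRingType.
Implicit Types e f : R.

Lemma symdiff_compl f e : symdiff f (1 - e) = 1 - symdiff f e.
Proof.
rewrite /symdiff opprB subrKC; apply/eqP; rewrite eq_sym subr_eq.
by rewrite addrACA -!mulrDr subrKC subrK !mulr1 subrKC.
Qed.

Lemma idempotent_symdiff f e :
  idempotent f -> idempotent e -> GRing.comm f e -> idempotent (symdiff f e).
Proof.
move=> ff ee fe.
have fe' : GRing.comm f (1 - e) by apply/commrB/fe/commr1.
have f'e : GRing.comm (1 - f) e by apply/commr_sym/commrB/commr_sym/fe/commr1.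
have f'e' : GRing.comm (1 - f) (1 - e) by apply/commrB/f'e/commr1.
apply: idempotentD_orth.
- exact: idempotentM (idempotent_compl ee) fe'.
- exact: idempotentM (idempotent_compl ff) ee f'e.
- exact: mulr_orth (idempotent_mul_compl ff) (commr_sym f'e').
- exact: mulr_orth (idempotent_compl_mul ff) (commr_sym fe).
Qed.

End SymmetricDifference.

Section SymdiffRightIdeal.
Variables (R : pzRingType) (r y e : R).
Hypotheses (ryr : r = r * y * r) (idem_e : idempotent e).
Hypotheses (central_e : forall a : R, GRing.comm e a)
  (central_ry : forall a : R, GRing.comm (r * y) a).

Lemma symdiff_in_right_ideal : in_right_ideal (r + e) (symdiff (r * y) e).
Proof.
exists (y * (1 - e) + (1 - r * y) * e).
have r_compl : r * (1 - r * y) = 0.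
  by rewrite -(central_compl central_ry) mulrBl mul1r -ryr subrr.
have e_compl : e * (1 - r * y) * e = (1 - r * y) * e by rewrite central_e -mulrA idem_e.
rewrite mulrDl (mulrDr r) (mulrDr e) !mulrA central_idempotent_orth // r_compl e_compl.
by rewrite mul0r addr0 add0r.
Qed.

End SymdiffRightIdeal.

Lemma compl_symdiff_in_right_ideal (R : pzRingType) (r y e : R) :
  r = r * y * r -> idempotent e -> (forall a, GRing.comm e a) ->
  (forall a, GRing.comm (r * y) a) ->
  in_right_ideal (1 - (r + e)) (1 - symdiff (r * y) e).
Proof.
move=> ryr ee central_e central_ry.
(* 1 - (r + e) = -r + (1 - e) and (-r)(-y) = ry: this is the previous lemma for -r, -y, 1 - e. *)
have -> : 1 - (r + e) = - r + (1 - e) by rewrite opprD addrCA.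
rewrite -symdiff_compl -[r * y]mulrNN.
apply: symdiff_in_right_ideal; first by rewrite mulrNN mulrN -ryr.
- exact: idempotent_compl.
- exact: central_compl.
- by rewrite mulrNN.
Qed.

Definition weakly_exchange_elt (R : pzRingType) (x : R) : Prop :=
  exists e : R, idempotent e /\ in_right_ideal x e /\
    (in_right_ideal (1 - x) (1 - e) \/ in_right_ideal (1 + x) (1 - e)).

Section WeaklyCleanElements.
Variable R : pzRingType.
Hypothesis abR : abelian_ring R.
Implicit Types e r x : R.

Lemma weakly_r_clean_eltN x : weakly_r_clean_elt x -> weakly_r_clean_elt (- x).
Proof.
case=> r [e [reg_r [ee x_eq]]]; exists (- r), e; split; first exact: regularN.
by split=> //; case: x_eq => ->; [right | left]; rewrite opprD ?opprK.
Qed.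

Lemma weakly_exchange_eltN x : weakly_exchange_elt x -> weakly_exchange_elt (- x).
Proof.
case=> e [ee [xe compl]]; exists e; split=> //; split; first exact: in_right_idealN.
by rewrite opprK; case: compl; [right | left].
Qed.

Lemma weakly_r_clean_elt_of_exchange x e : idempotent e ->
  in_right_ideal x e -> in_right_ideal (1 - x) (1 - e) -> weakly_r_clean_elt x.
Proof.
move=> ee xe compl; exists (x - (1 - e)), (1 - e).
split; first exact: (regular_sub_compl ee (abR ee) xe compl).
by split; [exact: idempotent_compl ee | left; rewrite subrK].
Qed.

Lemma weakly_exchange_elt_add_idempotent r e :
  regular r -> idempotent e -> weakly_exchange_elt (r + e).
Proof.
move=> [y ryr] ee.
have ff : idempotent (r * y) by rewrite /idempotent mulrA -ryr.
exists (symdiff (r * y) e); split; first exact: idempotent_symdiff (abR ff e).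
split; first exact: (symdiff_in_right_ideal ryr ee (abR ee) (abR ff)).
by left; exact: (compl_symdiff_in_right_ideal ryr ee (abR ee) (abR ff)).
Qed.

End WeaklyCleanElements.

Theorem theorem2p11 (R : pzRingType) :
  abelian_ring R -> (weakly_r_clean R <-> weakly_exchange R).
Proof.
move=> abR; split=> [clean x | exch x].
  have [r [e [reg_r [ee [->| ->]]]]] := clean x.
    exact: (weakly_exchange_elt_add_idempotent abR reg_r ee).
  have -> : r - e = - (- r + e) by rewrite opprD opprK.
  exact/weakly_exchange_eltN/(weakly_exchange_elt_add_idempotent abR (regularN reg_r) ee).
have [e [ee [xe [compl | compl]]]] := exch x.
  exact: (weakly_r_clean_elt_of_exchange abR ee xe compl).
rewrite -[x]opprK; apply/weakly_r_clean_eltN.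
by apply: (weakly_r_clean_elt_of_exchange abR ee (in_right_idealN xe)); rewrite opprK.
Qed.
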